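(* Let $D\subset\mathbb{R}^2$ be open, let $I\subset\mathbb{R}$ be an open interval, and let $\chi: D\times I\to\mathbb{R}^2$ be a $C^1$ map with $|\chi(x,t)|=1$ for all $(x,t)$. Let $R=\begin{bmatrix}0&-1\\1&0\end{bmatrix}$, write $\chi^{\perp}=R\chi$, let $\nabla\cdot\chi$ denote the divergence of $\chi(\cdot,t)$ with respect to $x$, and let $\partial_t\chi$ denote the partial derivative in $t$ at fixed $x$. Let $x:\mathbb{R}\times I\to D$, $(s,t)\mapsto x(s,t)$, be a $C^1$ map whose partial derivatives $\partial_s x$ and $\partial_t x$ are themselves $C^1$, and which satisfies $$\partial_s x(s,t)=\chi(x(s,t),t)\qquad\text{for all }(s,t).$$ Assume there is a $C^1$ function $\sigma:I\to(0,\infty)$ such that $x(s+\sigma(t),t)=x(s,t)$ for all $s,t$; thus for each $t$ the curve $s\mapsto x(s,t)$ is a closed, arclength-parametrized orbit of period $\sigma(t)$ of the direction field $\chi(\cdot,t)$. Assume further that $$\rho_2(t):=\exp\Big(\int_0^{\sigma(t)}\nabla\cdot\chi(x(\vartheta,t),t)\,d\vartheta\Big)\neq 1\qquad\text{for all } t\in I.$$ Define $$\psi(s,t):=\big\langle \chi^{\perp}(x(s,t),t),\,\partial_t\chi(x(s,t),t)\big\rangle,$$ $$\Pi^{\perp}(s,t):=\int_0^s \exp\Big(\int_\vartheta^s \nabla\cdot\chi(x(\tau,t),t)\,d\tau\Big)\,\psi(\vartheta,t)\,d\vartheta,$$ and let $$N(s,t):=\big\langle \partial_t x(s,t),\,\chi^{\perp}(x(s,t),t)\big\rangle$$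 be the normal velocity of the curve family. Then for all $s\in\mathbb{R}$ and $t\in I$, $$N(s,t)=\exp\Big(\int_0^s\nabla\cdot\chi(x(\vartheta,t),t)\,d\vartheta\Big)\,N(0,t)+\Pi^{\perp}(s,t),$$ and $$N(0,t)=\frac{\Pi^{\perp}(\sigma(t),t)}{1-\rho_2(t)}.$$ Moreover, suppose in addition that $\mu\in\mathbb{R}$ is a constant and $S: D\times I\to\mathbb{R}^{2\times 2}$ is a $C^1$ map with symmetric values such that $\langle\chi,(S-\mu I)\chi\rangle=0$ on $D\times I$. Then at every point $(x(s,t),t)$ where $\langle\chi,S\chi^{\perp}\rangle\neq0$, $$\psi(s,t)=-\frac{\langle\chi,\partial_tS\,\chi\rangle}{2\langle\chi,S\chi^{\perp}\rangle},$$ where $\chi$, $\chi^{\perp}$, $S$ and $\partial_t S$ are all evaluated at $(x(s,t),t)$.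
   Context: In the paper, the direction field is $\chi=\chi_\mu^{\pm}$, built from the eigenvalues $s_1\le s_2$ and unit eigenvectors $e_1$, $e_2=Re_1$ of the rate-of-strain tensor $S=\tfrac12(\nabla v+\nabla v^\top)$ of a planar unsteady velocity field $v(x,t)$: $$\chi_\mu^{\pm}=\sqrt{\tfrac{s_2-\mu}{s_2-s_1}}\,e_1\pm\sqrt{\tfrac{\mu-s_1}{s_2-s_1}}\,e_2 .$$ This field satisfies $\langle\chi,(S-\mu I)\chi\rangle=0$. Closed orbits (limit cycles) of such a field are called elliptic objective Eulerian coherent structures (OECSs). The pointwise material flux density through the moving curve is $$\varphi(x(s,t),t)=\langle v(x(s,t),t),\chi^\perp(x(s,t),t)\rangle-N(s,t).$$ The condition $\rho_2\neq1$ expresses hyperbolicity of the limit cycle: $\rho_2$ is its nontrivial Floquet multiplier. *)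

From Stdlib Require Import Reals.
From Coquelicot Require Import Coquelicot.
Open Scope R_scope.

Definition pd1 (f : R -> R -> R -> R) : R -> R -> R -> R :=
  fun x1 x2 t => Derive (fun z => f z x2 t) x1.
Definition pd2 (f : R -> R -> R -> R) : R -> R -> R -> R :=
  fun x1 x2 t => Derive (fun z => f x1 z t) x2.
Definition pd3 (f : R -> R -> R -> R) : R -> R -> R -> R :=
  fun x1 x2 t => Derive (fun z => f x1 x2 z) t.

Definition cont3 (f : R -> R -> R -> R) (x1 x2 t : R) : Prop :=
  continuous (fun p : (R * R) * R => f (fst (fst p)) (snd (fst p)) (snd p))
    ((x1, x2), t).

Definition C1_3 (U : R -> R -> R -> Prop) (f : R -> R -> R -> R) : Prop :=
  forall x1 x2 t, U x1 x2 t ->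
    ex_derive (fun z => f z x2 t) x1 /\
    ex_derive (fun z => f x1 z t) x2 /\
    ex_derive (fun z => f x1 x2 z) t /\
    cont3 f x1 x2 t /\ cont3 (pd1 f) x1 x2 t /\
    cont3 (pd2 f) x1 x2 t /\ cont3 (pd3 f) x1 x2 t.

Definition ps (f : R -> R -> R) : R -> R -> R :=
  fun s t => Derive (fun z => f z t) s.
Definition pt (f : R -> R -> R) : R -> R -> R :=
  fun s t => Derive (fun z => f s z) t.

Definition cont2 (f : R -> R -> R) (s t : R) : Prop :=
  continuous (fun p : R * R => f (fst p) (snd p)) (s, t).

Definition C1_2 (U : R -> R -> Prop) (f : R -> R -> R) : Prop :=
  forall s t, U s t ->
    ex_derive (fun z => f z t) s /\ ex_derive (fun z => f s z) t /\
    cont2 f s t /\ cont2 (ps f) s t /\ cont2 (pt f) s t.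

Definition dot2 (a1 a2 b1 b2 : R) : R := a1 * b1 + a2 * b2.

Definition divg (c1 c2 : R -> R -> R -> R) (x1 x2 t : R) : R :=
  pd1 c1 x1 x2 t + pd2 c2 x1 x2 t.

Definition inI (a b : Rbar) (t : R) : Prop := Rbar_lt a t /\ Rbar_lt t b.

From Stdlib Require Import Reals Lra.
From Coquelicot Require Import Coquelicot.
Open Scope R_scope.

(* Write X = \partial_t x.  Differentiating \partial_s x = \chi(x, t) in t gives
   \partial_s X = (\nabla\chi) X + \partial_t\chi, and the 2x2 identity
   M^T R + R M = (tr M) R turns this into the scalar linear equation
   \partial_s N = (\nabla\cdot\chi) N + \psi for N = <X, \chi^\perp>; variation of constants
   gives the first formula.  Differentiating x(s + \sigma(t), t) = x(s, t) in t shows that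
   X(\sigma, t) - X(0, t) is a multiple of \chi, so N is \sigma-periodic, and evaluating the
   formula at s = \sigma determines N(0, t) because \rho_2 <> 1.  For the second part,
   differentiating |\chi|^2 = 1 gives \partial_t\chi = \psi \chi^\perp, and differentiating
   <\chi, (S - \mu) \chi> = 0 in t gives
   2 \psi <\chi, S \chi^\perp> + <\chi, \partial_t S \chi> = 0. *)

Lemma locally_pair {U V : UniformSpace} (x : U) (y : V) (P : U -> Prop) (Q : V -> Prop) :
  locally x P -> locally y Q -> locally (x, y) (fun z => P (fst z) /\ Q (snd z)).
Proof.
  intros [e HP] [d HQ].
  exists (mkposreal _ (Rmin_stable_in_posreal e d)); intros [z1 z2] [h1 h2]; split.
  - apply HP; apply (ball_le _ _ _ (Rmin_l e d)); exact h1.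
  - apply HQ; apply (ball_le _ _ _ (Rmin_r e d)); exact h2.
Qed.

Lemma locally_inI (a b : Rbar) (t : R) : inI a b t -> locally t (inI a b).
Proof. apply (open_and _ _ (open_Rbar_gt a) (open_Rbar_lt b)). Qed.

(** * Continuous partial derivatives and the chain rule *)

Lemma mean_value_linear_bound (g : R -> R) (x y L e : R) :
  (forall z, Rmin x y <= z <= Rmax x y -> ex_derive g z /\ Rabs (Derive g z - L) <= e) ->
  Rabs (g y - g x - L * (y - x)) <= e * Rabs (y - x).
Proof.
  intros Hg.
  destruct (MVT_gen g x y (Derive g)) as [c [Hc ->]].
  - intros z Hz; apply Derive_correct, Hg; lra.
  - intros z Hz; apply continuity_pt_filterlim.
    apply (ex_derive_continuous (K := R_AbsRing) (V := R_NormedModule)), Hg, Hz.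
  - replace (Derive g c * (y - x) - L * (y - x)) with ((Derive g c - L) * (y - x)) by ring.
    rewrite Rabs_mult; apply Rmult_le_compat_r; [apply Rabs_pos | apply Hg, Hc].
Qed.

Definition dlin3 (l1 l2 l3 : R) (h : (R * R) * R) : R :=
  l1 * fst (fst h) + l2 * snd (fst h) + l3 * snd h.

Lemma Rabs_le_norm3 (h : (R * R) * R) :
  Rabs (fst (fst h)) <= norm h /\ Rabs (snd (fst h)) <= norm h /\ Rabs (snd h) <= norm h.
Proof.
  assert (H1 := norm_le_prod_norm_1 h); assert (H2 := norm_le_prod_norm_2 h).
  assert (H11 := norm_le_prod_norm_1 (fst h)); assert (H12 := norm_le_prod_norm_2 (fst h)).
  change (norm (fst (fst h))) with (Rabs (fst (fst h))) in H11.
  change (norm (snd (fst h))) with (Rabs (snd (fst h))) in H12.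
  change (norm (snd h)) with (Rabs (snd h)) in H2.
  repeat split; [exact (Rle_trans _ _ _ H11 H1) | exact (Rle_trans _ _ _ H12 H1) | exact H2].
Qed.

Lemma is_linear_dlin3 (l1 l2 l3 : R) : is_linear (dlin3 l1 l2 l3).
Proof.
  split.
  - intros [[x1 x2] x3] [[y1 y2] y3]; unfold dlin3; simpl; unfold plus; simpl; ring.
  - intros k [[x1 x2] x3]; unfold dlin3; simpl; unfold scal; simpl; unfold mult; simpl; ring.
  - exists (Rabs l1 + Rabs l2 + Rabs l3 + 1); split.
    + generalize (Rabs_pos l1) (Rabs_pos l2) (Rabs_pos l3); lra.
    + intros h; destruct (Rabs_le_norm3 h) as (B1 & B2 & B3).
      change (norm (dlin3 l1 l2 l3 h)) with (Rabs (dlin3 l1 l2 l3 h)); unfold dlin3.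
      assert (N := norm_ge_0 h).
      eapply Rle_trans; [apply Rabs_triang|].
      eapply Rle_trans; [apply Rplus_le_compat_r, Rabs_triang|].
      rewrite !Rabs_mult.
      generalize (Rabs_pos l1) (Rabs_pos l2) (Rabs_pos l3)
        (Rabs_pos (fst (fst h))) (Rabs_pos (snd (fst h))) (Rabs_pos (snd h)); nra.
Qed.

Definition partials_exist3 (f : R -> R -> R -> R) (q : (R * R) * R) : Prop :=
  ex_derive (fun z => f z (snd (fst q)) (snd q)) (fst (fst q)) /\
  ex_derive (fun z => f (fst (fst q)) z (snd q)) (snd (fst q)) /\
  ex_derive (fun z => f (fst (fst q)) (snd (fst q)) z) (snd q).

Lemma ball3 (p1 p2 p3 : R) (d : posreal) (y1 y2 y3 : R) :
  ball ((p1, p2), p3) d ((y1, y2), y3) <->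
  Rabs (y1 - p1) < d /\ Rabs (y2 - p2) < d /\ Rabs (y3 - p3) < d.
Proof.
  change ((Rabs (y1 - p1) < d /\ Rabs (y2 - p2) < d) /\ Rabs (y3 - p3) < d <->
    Rabs (y1 - p1) < d /\ Rabs (y2 - p2) < d /\ Rabs (y3 - p3) < d); tauto.
Qed.

Lemma cont3_locally_ball (g : R -> R -> R -> R) (p1 p2 p3 : R) (e : posreal) :
  cont3 g p1 p2 p3 ->
  locally ((p1, p2), p3) (fun q => Rabs (g (fst (fst q)) (snd (fst q)) (snd q) - g p1 p2 p3) < e).
Proof. intros C; exact (C _ (locally_ball _ e)). Qed.

Lemma Rabs_between (p q c : R) : Rmin p q <= c <= Rmax p q -> Rabs (c - p) <= Rabs (q - p).
Proof. unfold Rmin, Rmax; destruct (Rle_dec p q); intros; split_Rabs; lra. Qed.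

Lemma increment3_bound (f : R -> R -> R -> R) (p1 p2 p3 d e : R) :
  (forall z1 z2 z3, Rabs (z1 - p1) < d -> Rabs (z2 - p2) < d -> Rabs (z3 - p3) < d ->
     partials_exist3 f ((z1, z2), z3) /\ Rabs (pd1 f z1 z2 z3 - pd1 f p1 p2 p3) <= e /\
     Rabs (pd2 f z1 z2 z3 - pd2 f p1 p2 p3) <= e /\ Rabs (pd3 f z1 z2 z3 - pd3 f p1 p2 p3) <= e) ->
  forall y1 y2 y3, Rabs (y1 - p1) < d -> Rabs (y2 - p2) < d -> Rabs (y3 - p3) < d ->
  Rabs (f y1 y2 y3 - f p1 p2 p3
        - dlin3 (pd1 f p1 p2 p3) (pd2 f p1 p2 p3) (pd3 f p1 p2 p3) ((y1 - p1, y2 - p2), y3 - p3))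
    <= e * (Rabs (y1 - p1) + Rabs (y2 - p2) + Rabs (y3 - p3)).
Proof.
  intros Near y1 y2 y3 h1 h2 h3; unfold partials_exist3 in Near; simpl in Near.
  assert (Hd0 : forall u, Rabs (u - u) < d)
    by (intros; rewrite Rminus_eq_0, Rabs_R0; generalize (Rabs_pos (y1 - p1)); lra).
  assert (B1 : Rabs (f y1 y2 y3 - f p1 y2 y3 - pd1 f p1 p2 p3 * (y1 - p1)) <= e * Rabs (y1 - p1)).
  { apply (mean_value_linear_bound (fun z => f z y2 y3)); intros z Hz%Rabs_between.
    destruct (Near z y2 y3 ltac:(lra) h2 h3) as ((? & _) & ? & _); split; assumption. }
  assert (B2 : Rabs (f p1 y2 y3 - f p1 p2 y3 - pd2 f p1 p2 p3 * (y2 - p2)) <= e * Rabs (y2 - p2)).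
  { apply (mean_value_linear_bound (fun z => f p1 z y3)); intros z Hz%Rabs_between.
    destruct (Near p1 z y3 (Hd0 p1) ltac:(lra) h3) as ((_ & ? & _) & _ & ? & _);
      split; assumption. }
  assert (B3 : Rabs (f p1 p2 y3 - f p1 p2 p3 - pd3 f p1 p2 p3 * (y3 - p3)) <= e * Rabs (y3 - p3)).
  { apply (mean_value_linear_bound (fun z => f p1 p2 z)); intros z Hz%Rabs_between.
    destruct (Near p1 p2 z (Hd0 p1) (Hd0 p2) ltac:(lra)) as ((_ & _ & ?) & _ & _ & ?);
      split; assumption. }
  unfold dlin3; simpl.
  replace (f y1 y2 y3 - f p1 p2 p3 - (pd1 f p1 p2 p3 * (y1 - p1) + pd2 f p1 p2 p3 * (y2 - p2)
     + pd3 f p1 p2 p3 * (y3 - p3))) with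
    ((f y1 y2 y3 - f p1 y2 y3 - pd1 f p1 p2 p3 * (y1 - p1))
     + (f p1 y2 y3 - f p1 p2 y3 - pd2 f p1 p2 p3 * (y2 - p2))
     + (f p1 p2 y3 - f p1 p2 p3 - pd3 f p1 p2 p3 * (y3 - p3))) by ring.
  eapply Rle_trans; [apply Rabs_triang|].
  eapply Rle_trans; [apply Rplus_le_compat_r, Rabs_triang|]; lra.
Qed.

Lemma filterdiff_continuous_partials3 (f : R -> R -> R -> R) (p1 p2 p3 : R) :
  locally ((p1, p2), p3) (partials_exist3 f) ->
  cont3 (pd1 f) p1 p2 p3 -> cont3 (pd2 f) p1 p2 p3 -> cont3 (pd3 f) p1 p2 p3 ->
  filterdiff (fun q : (R * R) * R => f (fst (fst q)) (snd (fst q)) (snd q))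
    (locally ((p1, p2), p3)) (dlin3 (pd1 f p1 p2 p3) (pd2 f p1 p2 p3) (pd3 f p1 p2 p3)).
Proof.
  intros Hex C1 C2 C3; split; [apply is_linear_dlin3|].
  intros y Hy eps.
  apply (is_filter_lim_locally_unique (K := R_AbsRing) (V := prod_NormedModule _
    (prod_NormedModule _ R_NormedModule R_NormedModule) R_NormedModule)) in Hy; subst y.
  assert (He : 0 < eps / 3) by (generalize (cond_pos eps); lra).
  set (e := mkposreal _ He).
  destruct (filter_and _ _ Hex (filter_and _ _ (cont3_locally_ball _ _ _ _ e C1)
     (filter_and _ _ (cont3_locally_ball _ _ _ _ e C2) (cont3_locally_ball _ _ _ _ e C3))))
    as [d Hd].
  unfold locally; exists d; intros y Hy; destruct y as [[y1 y2] y3].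
  apply ball3 in Hy as (h1 & h2 & h3).
  assert (Hinc := increment3_bound f p1 p2 p3 d e); simpl in Hinc.
  destruct (Rabs_le_norm3 (minus ((y1, y2), y3) ((p1, p2), p3))) as (N1 & N2 & N3).
  change (Rabs (f y1 y2 y3 - f p1 p2 p3 - dlin3 (pd1 f p1 p2 p3) (pd2 f p1 p2 p3) (pd3 f p1 p2 p3)
     ((y1 - p1, y2 - p2), y3 - p3)) <= eps * norm (minus ((y1, y2), y3) ((p1, p2), p3))).
  set (n := norm (minus ((y1, y2), y3) ((p1, p2), p3))) in *.
  change (Rabs (y1 - p1) <= n) in N1; change (Rabs (y2 - p2) <= n) in N2;
    change (Rabs (y3 - p3) <= n) in N3.
  eapply Rle_trans; [apply Hinc; [|exact h1|exact h2|exact h3] | nra].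
  intros z1 z2 z3 k1 k2 k3; destruct (Hd ((z1, z2), z3)) as (? & ? & ? & ?); [apply ball3; auto|].
  split; [assumption|]; repeat split; apply Rlt_le; assumption.
Qed.

Lemma filterdiff_pair {K : AbsRing} {T U V : NormedModule K} (f : T -> U) (g : T -> V)
    (x : T) (lf : T -> U) (lg : T -> V) :
  filterdiff f (locally x) lf -> filterdiff g (locally x) lg ->
  filterdiff (fun y => (f y, g y)) (locally x) (fun y => (lf y, lg y)).
Proof.
  intros Hf Hg; apply (filterdiff_comp'_2 f g pair x lf lg pair Hf Hg).
  apply filterdiff_linear, (is_linear_ext (fun t => t)); [intros [? ?]; reflexivity|].
  apply is_linear_id.
Qed.

Lemma is_derive_comp3 (f : R -> R -> R -> R) (u v w : R -> R) (t du dv dw : R) :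
  locally ((u t, v t), w t) (partials_exist3 f) ->
  cont3 (pd1 f) (u t) (v t) (w t) -> cont3 (pd2 f) (u t) (v t) (w t) ->
  cont3 (pd3 f) (u t) (v t) (w t) ->
  is_derive u t du -> is_derive v t dv -> is_derive w t dw ->
  is_derive (fun z => f (u z) (v z) (w z)) t
    (pd1 f (u t) (v t) (w t) * du + pd2 f (u t) (v t) (w t) * dv
     + pd3 f (u t) (v t) (w t) * dw).
Proof.
  intros Hex C1 C2 C3 Du Dv Dw.
  eapply filterdiff_ext_lin.
  - apply (filterdiff_comp' (fun z => ((u z, v z), w z))
      (fun q : (R * R) * R => f (fst (fst q)) (snd (fst q)) (snd q))).
    + apply filterdiff_pair; [apply filterdiff_pair|]; eassumption.
    + apply filterdiff_continuous_partials3; assumption.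
  - intros y; unfold dlin3; simpl; unfold scal; simpl; unfold mult; simpl; ring.
Qed.

Lemma is_derive_comp2 (f : R -> R -> R) (u w : R -> R) (t du dw : R) :
  locally (u t, w t) (fun q => ex_derive (fun z => f z (snd q)) (fst q)) ->
  cont2 (ps f) (u t) (w t) -> ex_derive (fun z => f (u t) z) (w t) ->
  is_derive u t du -> is_derive w t dw ->
  is_derive (fun z => f (u z) (w z)) t (ps f (u t) (w t) * du + pt f (u t) (w t) * dw).
Proof.
  intros Hex C Ew Du Dw.
  eapply filterdiff_ext_lin.
  - apply (filterdiff_comp'_2 u w f t _ _
      (fun a b => plus (scal a (ps f (u t) (w t))) (scal b (pt f (u t) (w t)))) Du Dw).
    apply (is_derive_filterdiff f (u t) (w t) (ps f)); [|apply Derive_correct, Ew | exact C].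
    apply (filter_imp _ _ (fun q Hq => Derive_correct _ _ Hq) Hex).
  - intros y; simpl; unfold plus, scal; simpl; unfold mult, plus; simpl; unfold pt; ring.
Qed.

Lemma locally_C1_domain (D : R -> R -> Prop) (a b : Rbar) (y1 y2 t : R) :
  open (fun p : R * R => D (fst p) (snd p)) -> D y1 y2 -> inI a b t ->
  locally ((y1, y2), t) (fun q => D (fst (fst q)) (snd (fst q)) /\ inI a b (snd q)).
Proof.
  intros HD Hy Ht.
  apply (filter_imp (fun q => D (fst (fst q)) (snd (fst q)) /\ inI a b (snd q)));
    [tauto | apply (locally_pair (y1, y2) t _ _ (HD (y1, y2) Hy) (locally_inI a b t Ht))].
Qed.

Lemma is_derive_comp_C1_3 (D : R -> R -> Prop) (a b : Rbar) (f : R -> R -> R -> R)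
    (u v w : R -> R) (t du dv dw : R) :
  open (fun p : R * R => D (fst p) (snd p)) ->
  C1_3 (fun y1 y2 t => D y1 y2 /\ inI a b t) f -> D (u t) (v t) -> inI a b (w t) ->
  is_derive u t du -> is_derive v t dv -> is_derive w t dw ->
  is_derive (fun z => f (u z) (v z) (w z)) t
    (pd1 f (u t) (v t) (w t) * du + pd2 f (u t) (v t) (w t) * dv
     + pd3 f (u t) (v t) (w t) * dw).
Proof.
  intros HD Hf Hy Ht.
  destruct (Hf _ _ _ (conj Hy Ht)) as (_ & _ & _ & _ & C1 & C2 & C3).
  apply is_derive_comp3; try assumption.
  apply (filter_imp (fun q => D (fst (fst q)) (snd (fst q)) /\ inI a b (snd q)));
    [|apply locally_C1_domain; assumption].
  intros [[q1 q2] q3] Hq; destruct (Hf q1 q2 q3 Hq) as (? & ? & ? & _); repeat split; assumption.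
Qed.

Lemma is_derive_value (f : R -> R) (x l l' : R) : is_derive f x l -> l = l' -> is_derive f x l'.
Proof. intros H <-; exact H. Qed.

Lemma is_derive_dot2 (f1 f2 g1 g2 : R -> R) (s df1 df2 dg1 dg2 : R) :
  is_derive f1 s df1 -> is_derive f2 s df2 -> is_derive g1 s dg1 -> is_derive g2 s dg2 ->
  is_derive (fun z => dot2 (f1 z) (f2 z) (g1 z) (g2 z)) s
    (dot2 df1 df2 (g1 s) (g2 s) + dot2 (f1 s) (f2 s) dg1 dg2).
Proof.
  intros F1 F2 G1 G2; unfold dot2; auto_derive.
  - repeat split; eexists; eassumption.
  - replace (Derive (fun x : R => f1 x) s) with df1 by (symmetry; apply is_derive_unique, F1).
    replace (Derive (fun x : R => f2 x) s) with df2 by (symmetry; apply is_derive_unique, F2).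
    replace (Derive (fun x : R => g1 x) s) with dg1 by (symmetry; apply is_derive_unique, G1).
    replace (Derive (fun x : R => g2 x) s) with dg2 by (symmetry; apply is_derive_unique, G2).
    ring.
Qed.

Lemma is_derive_Ropp (f : R -> R) (s l : R) : is_derive f s l -> is_derive (fun z => - f z) s (- l).
Proof. apply (is_derive_opp (K := R_AbsRing) (V := R_NormedModule)). Qed.

Lemma is_derive_locally_constant (g : R -> R) (t k l : R) :
  locally t (fun z => g z = k) -> is_derive g t l -> l = 0.
Proof.
  intros Hk Hg.
  assert (H0 : is_derive g t 0).
  { apply (is_derive_ext_loc (fun _ => k)); [apply (filter_imp _ _ (fun z Hz => eq_sym Hz) Hk)|].
    apply (is_derive_const (K := R_AbsRing) (V := R_NormedModule)). }
  rewrite <- (is_derive_unique _ _ _ Hg); exact (is_derive_unique _ _ _ H0).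
Qed.

Lemma ps_pt_comm (a b : Rbar) (x : R -> R -> R) (s t : R) :
  C1_2 (fun _ t => inI a b t) x -> C1_2 (fun _ t => inI a b t) (ps x) ->
  C1_2 (fun _ t => inI a b t) (pt x) -> inI a b t ->
  ps (pt x) s t = pt (ps x) s t.
Proof.
  intros Hx Hxs Hxt Ht; unfold ps, pt; apply Schwarz.
  - apply (proj2 (locally_2d_locally _ s t)).
    apply (filter_imp (fun q => True /\ inI a b (snd q)));
      [|apply (locally_pair s t _ _ filter_true (locally_inI a b t Ht))].
    intros [u v] [_ Hv].
    destruct (Hx u v Hv) as (? & ? & _), (Hxt u v Hv) as (? & _), (Hxs u v Hv) as (_ & ? & _).
    repeat split; assumption.
  - destruct (Hxt s t Ht) as (_ & _ & _ & C & _).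
    exact (proj2 (continuity_2d_pt_filterlim _ s t) C).
  - destruct (Hxs s t Ht) as (_ & _ & _ & _ & C).
    exact (proj2 (continuity_2d_pt_filterlim _ s t) C).
Qed.

Lemma pt_at_period (a b : Rbar) (x : R -> R -> R) (sigma : R -> R) (t : R) :
  C1_2 (fun _ t => inI a b t) x ->
  (forall s t, inI a b t -> x (s + sigma t) t = x s t) ->
  inI a b t -> ex_derive sigma t ->
  pt x (sigma t) t = pt x 0 t - ps x (sigma t) t * Derive sigma t.
Proof.
  intros Hx Hper Ht Hsig.
  destruct (Hx (sigma t) t Ht) as (_ & Ext & _ & Cs & _).
  assert (Hcomp : is_derive (fun z => x (sigma z) z) t
      (ps x (sigma t) t * Derive sigma t + pt x (sigma t) t * 1)).
  { apply (is_derive_comp2 x sigma (fun z => z)).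
    - apply (filter_imp (fun q => True /\ inI a b (snd q)));
        [|apply (locally_pair _ t _ _ filter_true (locally_inI a b t Ht))].
      intros q [_ Hq]; exact (proj1 (Hx _ _ Hq)).
    - exact Cs.
    - exact Ext.
    - apply Derive_correct, Hsig.
    - apply (is_derive_id (K := R_AbsRing)). }
  assert (Hper0 : is_derive (fun z => x (sigma z) z) t (pt x 0 t)).
  { apply (is_derive_ext_loc (fun z => x 0 z));
      [|apply Derive_correct, (proj1 (proj2 (Hx 0 t Ht)))].
    apply (filter_imp (inI a b)); [|apply locally_inI, Ht].
    intros z Hz; rewrite <- (Hper 0 z Hz), Rplus_0_l; reflexivity. }
  generalize (is_derive_unique _ _ _ Hcomp); rewrite (is_derive_unique _ _ _ Hper0); lra.
Qed.

(** * Linear first-order equations *)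

Lemma is_derive_RInt_0 (p : R -> R) (z : R) :
  (forall s, continuous p s) -> is_derive (fun s => RInt p 0 s) z (p z).
Proof.
  intros Hp; apply (is_derive_RInt (V := R_NormedModule)) with (a := 0); [|apply Hp].
  apply filter_forall; intros s; apply (RInt_correct (V := R_CompleteNormedModule)).
  apply (ex_RInt_continuous (V := R_CompleteNormedModule)); intros; apply Hp.
Qed.

Lemma linear_ode_variation_of_constants (y p g : R -> R) :
  (forall s, is_derive y s (p s * y s + g s)) ->
  (forall s, continuous p s) -> (forall s, continuous g s) ->
  forall s, y s = exp (RInt p 0 s) * y 0 + RInt (fun th => exp (RInt p th s) * g th) 0 s.
Proof.
  intros Hy Hp Hg s.
  set (P := fun z => RInt p 0 z).
  assert (HP : forall z, is_derive P z (p z)) by (intros; apply is_derive_RInt_0, Hp).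
  assert (Hint : is_RInt (fun z => g z * exp (- P z)) 0 s (y s * exp (- P s) - y 0 * exp (- P 0))).
  { apply (is_RInt_derive (V := R_CompleteNormedModule) (fun z => y z * exp (- P z))).
    - intros z _; auto_derive.
      + split; [exists (p z * y z + g z); apply Hy | split; [exists (p z); apply HP | exact I]].
      + replace (Derive (fun x : R => y x) z) with (p z * y z + g z)
          by (symmetry; apply is_derive_unique, Hy).
        replace (Derive (fun x : R => P x) z) with (p z) by (symmetry; apply is_derive_unique, HP).
        ring.
    - intros z _; apply (continuous_mult (K := R_AbsRing)); [apply Hg|].
      apply continuous_exp_comp, (continuous_opp (K := R_AbsRing) (V := R_NormedModule)).
      apply (ex_derive_continuous (K := R_AbsRing) (V := R_NormedModule)); eexists; apply HP. }
  assert (Chasles : forall th, RInt p th s = P s - P th).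
  { intros th; unfold P.
    assert (Hex : forall u v, ex_RInt p u v)
      by (intros; apply (ex_RInt_continuous (V := R_CompleteNormedModule)); intros; apply Hp).
    generalize (RInt_Chasles (V := R_CompleteNormedModule) p 0 th s (Hex _ _) (Hex _ _)).
    unfold plus; simpl; lra. }
  assert (Hsol : is_RInt (fun th => exp (RInt p th s) * g th) 0 s
      (exp (P s) * (y s * exp (- P s) - y 0 * exp (- P 0)))).
  { apply (is_RInt_ext (V := R_NormedModule) (fun th => scal (exp (P s)) (g th * exp (- P th)))).
    - intros th _; rewrite Chasles; unfold scal; simpl; unfold mult; simpl.
      unfold Rminus; rewrite exp_plus; ring.
    - apply (is_RInt_scal (V := R_NormedModule)), Hint. }
  rewrite (is_RInt_unique _ _ _ _ Hsol).
  assert (P0 : P 0 = 0) by apply (RInt_point (V := R_CompleteNormedModule)).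
  assert (Inv : exp (P s) * exp (- P s) = 1) by (rewrite <- exp_plus, Rplus_opp_r; apply exp_0).
  rewrite P0, Ropp_0, exp_0.
  transitivity (y s * (exp (P s) * exp (- P s))); [rewrite Inv; ring | ring].
Qed.

(** * The normal velocity along a closed orbit *)

Definition div_along (c1 c2 : R -> R -> R -> R) (x1 x2 : R -> R -> R) (s t : R) : R :=
  divg c1 c2 (x1 s t) (x2 s t) t.

Definition turning_rate (c1 c2 : R -> R -> R -> R) (x1 x2 : R -> R -> R) (s t : R) : R :=
  dot2 (- c2 (x1 s t) (x2 s t) t) (c1 (x1 s t) (x2 s t) t)
       (pd3 c1 (x1 s t) (x2 s t) t) (pd3 c2 (x1 s t) (x2 s t) t).

Definition normal_velocity (c1 c2 : R -> R -> R -> R) (x1 x2 : R -> R -> R) (s t : R) : R :=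
  dot2 (pt x1 s t) (pt x2 s t) (- c2 (x1 s t) (x2 s t) t) (c1 (x1 s t) (x2 s t) t).

Section ClosedOrbit.

Variables (D : R -> R -> Prop) (a b : Rbar) (c1 c2 : R -> R -> R -> R) (x1 x2 : R -> R -> R).
Hypothesis HDopen : open (fun p : R * R => D (fst p) (snd p)).
Hypothesis Hc1 : C1_3 (fun y1 y2 t => D y1 y2 /\ inI a b t) c1.
Hypothesis Hc2 : C1_3 (fun y1 y2 t => D y1 y2 /\ inI a b t) c2.
Hypothesis HxD : forall s t, inI a b t -> D (x1 s t) (x2 s t).
Hypothesis Hx1 : C1_2 (fun _ t => inI a b t) x1.
Hypothesis Hx2 : C1_2 (fun _ t => inI a b t) x2.
Hypothesis Hode1 : forall s t, inI a b t -> ps x1 s t = c1 (x1 s t) (x2 s t) t.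
Hypothesis Hode2 : forall s t, inI a b t -> ps x2 s t = c2 (x1 s t) (x2 s t) t.

Lemma is_derive_orbit (x : R -> R -> R) (c : R -> R -> R -> R) (s t : R) :
  C1_2 (fun _ t => inI a b t) x -> (forall s t, inI a b t -> ps x s t = c (x1 s t) (x2 s t) t) ->
  inI a b t -> is_derive (fun z => x z t) s (c (x1 s t) (x2 s t) t).
Proof.
  intros Hx Hode Ht; rewrite <- (Hode s t Ht); apply Derive_correct, (proj1 (Hx s t Ht)).
Qed.

Lemma is_derive_field_along_orbit (f : R -> R -> R -> R) (s t : R) :
  C1_3 (fun y1 y2 t => D y1 y2 /\ inI a b t) f -> inI a b t ->
  is_derive (fun z => f (x1 z t) (x2 z t) t) s
    (pd1 f (x1 s t) (x2 s t) t * c1 (x1 s t) (x2 s t) t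
     + pd2 f (x1 s t) (x2 s t) t * c2 (x1 s t) (x2 s t) t).
Proof.
  intros Hf Ht.
  eapply is_derive_ext; [intros z; reflexivity|].
  assert (H := is_derive_comp_C1_3 D a b f (fun z => x1 z t) (fun z => x2 z t) (fun _ => t) s
    _ _ 0 HDopen Hf (HxD s t Ht) Ht (is_derive_orbit x1 c1 s t Hx1 Hode1 Ht)
    (is_derive_orbit x2 c2 s t Hx2 Hode2 Ht)
    (is_derive_const (K := R_AbsRing) (V := R_NormedModule) t s)).
  rewrite Rmult_0_r, Rplus_0_r in H; exact H.
Qed.

Lemma continuous_along_orbit (g : R -> R -> R -> R) (s t : R) :
  (forall y1 y2 t, D y1 y2 -> inI a b t -> cont3 g y1 y2 t) -> inI a b t ->
  continuous (fun z => g (x1 z t) (x2 z t) t) s.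
Proof.
  intros Hg Ht.
  assert (Hcx : forall x c, C1_2 (fun _ t => inI a b t) x ->
      (forall s t, inI a b t -> ps x s t = c (x1 s t) (x2 s t) t) -> continuous (fun z => x z t) s).
  { intros x c Hx Hode; apply (ex_derive_continuous (K := R_AbsRing) (V := R_NormedModule)).
    eexists; apply (is_derive_orbit x c s t Hx Hode Ht). }
  apply (continuous_comp (fun z => ((x1 z t, x2 z t), t))
     (fun q : (R * R) * R => g (fst (fst q)) (snd (fst q)) (snd q))); [|apply Hg; auto].
  apply (continuous_comp_2 (fun z => (x1 z t, x2 z t)) (fun _ => t) pair);
    [|apply continuous_const
     |apply (continuous_ext (fun q => q)); [intros [? ?] | apply continuous_id]];
    auto.
  apply (continuous_comp_2 (fun z => x1 z t) (fun z => x2 z t) pair);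
    [apply (Hcx x1 c1 Hx1 Hode1) | apply (Hcx x2 c2 Hx2 Hode2)
    |apply (continuous_ext (fun q => q)); [intros [? ?] | apply continuous_id]]; auto.
Qed.

Lemma is_derive_pt_orbit (x : R -> R -> R) (c : R -> R -> R -> R) (s t : R) :
  C1_3 (fun y1 y2 t => D y1 y2 /\ inI a b t) c ->
  C1_2 (fun _ t => inI a b t) x -> C1_2 (fun _ t => inI a b t) (ps x) ->
  C1_2 (fun _ t => inI a b t) (pt x) ->
  (forall s t, inI a b t -> ps x s t = c (x1 s t) (x2 s t) t) -> inI a b t ->
  is_derive (fun z => pt x z t) s
    (pd1 c (x1 s t) (x2 s t) t * pt x1 s t + pd2 c (x1 s t) (x2 s t) t * pt x2 s t
     + pd3 c (x1 s t) (x2 s t) t).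
Proof.
  intros Hc Hx Hxs Hxt Hode Ht.
  assert (Hchain : is_derive (fun z => c (x1 s z) (x2 s z) z) t
      (pd1 c (x1 s t) (x2 s t) t * pt x1 s t + pd2 c (x1 s t) (x2 s t) t * pt x2 s t
       + pd3 c (x1 s t) (x2 s t) t * 1)).
  { apply (is_derive_comp_C1_3 D a b c); auto.
    - apply Derive_correct, (proj1 (proj2 (Hx1 s t Ht))).
    - apply Derive_correct, (proj1 (proj2 (Hx2 s t Ht))).
    - apply (is_derive_id (K := R_AbsRing)). }
  rewrite Rmult_1_r in Hchain.
  assert (Hpsx : is_derive (fun z => ps x s z) t
      (pd1 c (x1 s t) (x2 s t) t * pt x1 s t + pd2 c (x1 s t) (x2 s t) t * pt x2 s t
       + pd3 c (x1 s t) (x2 s t) t)).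
  { apply (is_derive_ext_loc (fun z => c (x1 s z) (x2 s z) z)); [|exact Hchain].
    apply (filter_imp (inI a b)); [intros z Hz; symmetry; apply Hode, Hz | apply locally_inI, Ht]. }
  assert (E : pt (ps x) s t = pd1 c (x1 s t) (x2 s t) t * pt x1 s t
      + pd2 c (x1 s t) (x2 s t) t * pt x2 s t + pd3 c (x1 s t) (x2 s t) t)
    by exact (is_derive_unique _ _ _ Hpsx).
  rewrite <- E, <- (ps_pt_comm a b x s t Hx Hxs Hxt Ht).
  exact (Derive_correct _ _ (proj1 (Hxt s t Ht))).
Qed.

Hypothesis Hx1s : C1_2 (fun _ t => inI a b t) (ps x1).
Hypothesis Hx1t : C1_2 (fun _ t => inI a b t) (pt x1).
Hypothesis Hx2s : C1_2 (fun _ t => inI a b t) (ps x2).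
Hypothesis Hx2t : C1_2 (fun _ t => inI a b t) (pt x2).

Lemma is_derive_normal_velocity (s t : R) : inI a b t ->
  is_derive (fun z => normal_velocity c1 c2 x1 x2 z t) s
    (div_along c1 c2 x1 x2 s t * normal_velocity c1 c2 x1 x2 s t + turning_rate c1 c2 x1 x2 s t).
Proof.
  intros Ht; eapply is_derive_value.
  - apply (is_derive_dot2 _ _ _ _ s _ _ _ _
      (is_derive_pt_orbit x1 c1 s t Hc1 Hx1 Hx1s Hx1t Hode1 Ht)
      (is_derive_pt_orbit x2 c2 s t Hc2 Hx2 Hx2s Hx2t Hode2 Ht)
      (is_derive_Ropp _ _ _ (is_derive_field_along_orbit c2 s t Hc2 Ht))
      (is_derive_field_along_orbit c1 s t Hc1 Ht)).
  - unfold div_along, normal_velocity, turning_rate, divg, dot2; ring.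
Qed.

Lemma continuous_C1_along_orbit (f : R -> R -> R -> R) (s t : R) :
  C1_3 (fun y1 y2 t => D y1 y2 /\ inI a b t) f -> inI a b t ->
  continuous (fun z => f (x1 z t) (x2 z t) t) s /\
  continuous (fun z => pd1 f (x1 z t) (x2 z t) t) s /\
  continuous (fun z => pd2 f (x1 z t) (x2 z t) t) s /\
  continuous (fun z => pd3 f (x1 z t) (x2 z t) t) s.
Proof.
  intros Hf Ht; repeat split; apply continuous_along_orbit; try exact Ht;
    intros y1 y2 t' Hy Ht'; destruct (Hf y1 y2 t' (conj Hy Ht')) as (_ & _ & _ & ? & ? & ? & ?);
    assumption.
Qed.

Lemma normal_velocity_solution (s t : R) : inI a b t ->
  normal_velocity c1 c2 x1 x2 s t =
  exp (RInt (fun th => div_along c1 c2 x1 x2 th t) 0 s) * normal_velocity c1 c2 x1 x2 0 t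
  + RInt (fun th => exp (RInt (fun tau => div_along c1 c2 x1 x2 tau t) th s)
                    * turning_rate c1 c2 x1 x2 th t) 0 s.
Proof.
  intros Ht.
  apply (linear_ode_variation_of_constants (fun z => normal_velocity c1 c2 x1 x2 z t)
    (fun z => div_along c1 c2 x1 x2 z t) (fun z => turning_rate c1 c2 x1 x2 z t));
    [intros; apply is_derive_normal_velocity, Ht | |]; intros z;
    destruct (continuous_C1_along_orbit c1 z t Hc1 Ht) as (K1 & P11 & _ & T1),
      (continuous_C1_along_orbit c2 z t Hc2 Ht) as (K2 & _ & P22 & T2).
  - apply (continuous_plus (K := R_AbsRing) (V := R_NormedModule)); assumption.
  - apply (continuous_plus (K := R_AbsRing) (V := R_NormedModule));
      apply (continuous_mult (K := R_AbsRing)); try assumption.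
    apply (continuous_opp (K := R_AbsRing) (V := R_NormedModule)), K2.
Qed.

Lemma normal_velocity_periodic (sigma : R -> R) (t : R) :
  (forall s t, inI a b t -> x1 (s + sigma t) t = x1 s t) ->
  (forall s t, inI a b t -> x2 (s + sigma t) t = x2 s t) ->
  inI a b t -> ex_derive sigma t ->
  normal_velocity c1 c2 x1 x2 (sigma t) t = normal_velocity c1 c2 x1 x2 0 t.
Proof.
  intros Hp1 Hp2 Ht Hs.
  assert (E1 := Hp1 0 t Ht); assert (E2 := Hp2 0 t Ht); rewrite Rplus_0_l in E1, E2.
  unfold normal_velocity.
  rewrite (pt_at_period a b x1 sigma t Hx1 Hp1 Ht Hs), (pt_at_period a b x2 sigma t Hx2 Hp2 Ht Hs),
    (Hode1 _ _ Ht), (Hode2 _ _ Ht), E1, E2.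
  unfold dot2; ring.
Qed.

End ClosedOrbit.

(** * The turning rate of an eigen-direction field *)

Lemma turning_rate_eigen_algebra (u1 u2 A1 A2 s11 s12 s22 T11 T12 T21 T22 mu : R) :
  u1 ^ 2 + u2 ^ 2 = 1 -> u1 * A1 + u2 * A2 = 0 ->
  dot2 A1 A2 ((s11 - mu) * u1 + s12 * u2) (s12 * u1 + (s22 - mu) * u2)
  + dot2 u1 u2 (T11 * u1 + (s11 - mu) * A1 + (T12 * u2 + s12 * A2))
               (T21 * u1 + s12 * A1 + (T22 * u2 + (s22 - mu) * A2)) = 0 ->
  dot2 u1 u2 (s11 * - u2 + s12 * u1) (s12 * - u2 + s22 * u1) <> 0 ->
  dot2 (- u2) u1 A1 A2 =
  - dot2 u1 u2 (T11 * u1 + T12 * u2) (T21 * u1 + T22 * u2)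
    / (2 * dot2 u1 u2 (s11 * - u2 + s12 * u1) (s12 * - u2 + s22 * u1)).
Proof.
  intros Hu HA HQ Hq.
  (* A is orthogonal to the unit vector u, hence A = p u^\perp. *)
  set (p := dot2 (- u2) u1 A1 A2) in *.
  assert (HA1 : A1 = - u2 * p).
  { assert (E : A1 + u2 * p = A1 * (1 - (u1 ^ 2 + u2 ^ 2)) + u1 * (u1 * A1 + u2 * A2))
      by (unfold p, dot2; ring).
    rewrite Hu, HA in E; lra. }
  assert (HA2 : A2 = u1 * p).
  { assert (E : A2 - u1 * p = A2 * (1 - (u1 ^ 2 + u2 ^ 2)) + u2 * (u1 * A1 + u2 * A2))
      by (unfold p, dot2; ring).
    rewrite Hu, HA in E; lra. }
  clearbody p; subst A1 A2.
  field_simplify_eq; [|exact Hq].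
  unfold dot2 in *; lra.
Qed.

Lemma turning_rate_eigen_constraint (u1 u2 s11 s12 s21 s22 : R -> R) (mu t : R) :
  ex_derive u1 t -> ex_derive u2 t -> ex_derive s11 t -> ex_derive s12 t ->
  ex_derive s21 t -> ex_derive s22 t ->
  locally t (fun z => u1 z ^ 2 + u2 z ^ 2 = 1) ->
  locally t (fun z => dot2 (u1 z) (u2 z) ((s11 z - mu) * u1 z + s12 z * u2 z)
                                         (s21 z * u1 z + (s22 z - mu) * u2 z) = 0) ->
  s12 t = s21 t ->
  dot2 (u1 t) (u2 t) (s11 t * - u2 t + s12 t * u1 t) (s21 t * - u2 t + s22 t * u1 t) <> 0 ->
  dot2 (- u2 t) (u1 t) (Derive u1 t) (Derive u2 t) =
  - dot2 (u1 t) (u2 t) (Derive s11 t * u1 t + Derive s12 t * u2 t)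
                       (Derive s21 t * u1 t + Derive s22 t * u2 t)
    / (2 * dot2 (u1 t) (u2 t) (s11 t * - u2 t + s12 t * u1 t) (s21 t * - u2 t + s22 t * u1 t)).
Proof.
  intros E1 E2 E11 E12 E21 E22 Hunit Hquad Hsym Hq.
  assert (HA := is_derive_locally_constant _ t _ _ Hunit
    ltac:(auto_derive; [repeat split; assumption | reflexivity])).
  assert (HQ := is_derive_locally_constant _ t _ _ Hquad
    ltac:(unfold dot2; auto_derive; [repeat split; assumption | reflexivity])).
  rewrite <- Hsym in Hq, HQ |- *.
  set (A1 := Derive u1 t) in *; set (A2 := Derive u2 t) in *.
  set (T11 := Derive s11 t) in *; set (T12 := Derive s12 t) in *.
  set (T21 := Derive s21 t) in *; set (T22 := Derive s22 t) in *.
  apply turning_rate_eigen_algebra with mu;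
    [apply (locally_singleton _ _ Hunit) | lra | | exact Hq].
  unfold dot2; lra.
Qed.

Lemma affine_fixed_point (n r p : R) : n = r * n + p -> r <> 1 -> n = p / (1 - r).
Proof. intros E Hr; field_simplify_eq; [nra | lra]. Qed.

Theorem mainTheorem1
  (D : R -> R -> Prop) (a b : Rbar)
  (c1 c2 : R -> R -> R -> R)
  (x1 x2 : R -> R -> R)
  (sigma : R -> R)
  (HDopen : open (fun p : R * R => D (fst p) (snd p)))
  (Hab : Rbar_lt a b)
  (Hc1 : C1_3 (fun y1 y2 t : R => D y1 y2 /\ inI a b t) c1)
  (Hc2 : C1_3 (fun y1 y2 t : R => D y1 y2 /\ inI a b t) c2)
  (Hunit : forall y1 y2 t : R, D y1 y2 -> inI a b t ->
      c1 y1 y2 t ^ 2 + c2 y1 y2 t ^ 2 = 1)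
  (HxD : forall s t : R, inI a b t -> D (x1 s t) (x2 s t))
  (Hx1 : C1_2 (fun s t : R => inI a b t) x1)
  (Hx2 : C1_2 (fun s t : R => inI a b t) x2)
  (Hx1s : C1_2 (fun s t : R => inI a b t) (ps x1))
  (Hx1t : C1_2 (fun s t : R => inI a b t) (pt x1))
  (Hx2s : C1_2 (fun s t : R => inI a b t) (ps x2))
  (Hx2t : C1_2 (fun s t : R => inI a b t) (pt x2))
  (Hode1 : forall s t : R, inI a b t ->
      ps x1 s t = c1 (x1 s t) (x2 s t) t)
  (Hode2 : forall s t : R, inI a b t ->
      ps x2 s t = c2 (x1 s t) (x2 s t) t)
  (Hsig_pos : forall t : R, inI a b t -> 0 < sigma t)
  (Hsig_C1 : forall t : R, inI a b t ->
      ex_derive sigma t /\ continuous sigma t /\ continuous (Derive sigma) t)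
  (Hper1 : forall s t : R, inI a b t ->
      x1 (s + sigma t) t = x1 s t)
  (Hper2 : forall s t : R, inI a b t ->
      x2 (s + sigma t) t = x2 s t)
  (Hrho : forall t : R, inI a b t ->
      exp (RInt (fun th => divg c1 c2 (x1 th t) (x2 th t) t) 0 (sigma t)) <> 1) :
  let dv := fun s t => divg c1 c2 (x1 s t) (x2 s t) t in
  let rho2 := fun t => exp (RInt (fun th => dv th t) 0 (sigma t)) in
  let psi := fun s t =>
      dot2 (- c2 (x1 s t) (x2 s t) t) (c1 (x1 s t) (x2 s t) t)
           (pd3 c1 (x1 s t) (x2 s t) t) (pd3 c2 (x1 s t) (x2 s t) t) in
  let Piperp := fun s t =>
      RInt (fun th => exp (RInt (fun tau => dv tau t) th s) * psi th t) 0 s in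
  let N := fun s t =>
      dot2 (pt x1 s t) (pt x2 s t)
           (- c2 (x1 s t) (x2 s t) t) (c1 (x1 s t) (x2 s t) t) in
  (forall s t : R, inI a b t ->
     N s t = exp (RInt (fun th => dv th t) 0 s) * N 0 t + Piperp s t /\
     N 0 t = Piperp (sigma t) t / (1 - rho2 t))
  /\
  (forall (mu : R) (S11 S12 S21 S22 : R -> R -> R -> R),
     C1_3 (fun y1 y2 t : R => D y1 y2 /\ inI a b t) S11 ->
     C1_3 (fun y1 y2 t : R => D y1 y2 /\ inI a b t) S12 ->
     C1_3 (fun y1 y2 t : R => D y1 y2 /\ inI a b t) S21 ->
     C1_3 (fun y1 y2 t : R => D y1 y2 /\ inI a b t) S22 ->
     (forall y1 y2 t : R, D y1 y2 -> inI a b t ->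
        S12 y1 y2 t = S21 y1 y2 t) ->
     (forall y1 y2 t : R, D y1 y2 -> inI a b t ->
        let u1 := c1 y1 y2 t in let u2 := c2 y1 y2 t in
        dot2 u1 u2 ((S11 y1 y2 t - mu) * u1 + S12 y1 y2 t * u2)
                   (S21 y1 y2 t * u1 + (S22 y1 y2 t - mu) * u2) = 0) ->
     forall s t : R, inI a b t ->
       let y1 := x1 s t in let y2 := x2 s t in
       let u1 := c1 y1 y2 t in let u2 := c2 y1 y2 t in
       let q := dot2 u1 u2 (S11 y1 y2 t * (- u2) + S12 y1 y2 t * u1)
                           (S21 y1 y2 t * (- u2) + S22 y1 y2 t * u1) in
       q <> 0 ->
       psi s t =
         - dot2 u1 u2 (pd3 S11 y1 y2 t * u1 + pd3 S12 y1 y2 t * u2)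
                      (pd3 S21 y1 y2 t * u1 + pd3 S22 y1 y2 t * u2)
           / (2 * q)).
Proof.
  intros dv rho2 psi Piperp N; split.
  - intros s t Ht.
    assert (Hsol := fun s => normal_velocity_solution D a b c1 c2 x1 x2 HDopen Hc1 Hc2 HxD
      Hx1 Hx2 Hode1 Hode2 Hx1s Hx1t Hx2s Hx2t s t Ht).
    split; [exact (Hsol s)|].
    apply affine_fixed_point; [|exact (Hrho t Ht)].
    assert (Hs := Hsol (sigma t)).
    rewrite (normal_velocity_periodic a b c1 c2 x1 x2 Hx1 Hx2 Hode1 Hode2 sigma t Hper1 Hper2 Ht
      (proj1 (Hsig_C1 t Ht))) in Hs.
    exact Hs.
  - intros mu S11 S12 S21 S22 HS11 HS12 HS21 HS22 Hsym Hquad s t Ht y1 y2 u1 u2 q Hq.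
    assert (HD : D y1 y2) by exact (HxD s t Ht).
    assert (Ex : forall f, C1_3 (fun y1 y2 t => D y1 y2 /\ inI a b t) f ->
        ex_derive (fun z => f y1 y2 z) t)
      by (intros f Hf; exact (proj1 (proj2 (proj2 (Hf _ _ _ (conj HD Ht)))))).
    apply (turning_rate_eigen_constraint (fun z => c1 y1 y2 z) (fun z => c2 y1 y2 z)
      (fun z => S11 y1 y2 z) (fun z => S12 y1 y2 z) (fun z => S21 y1 y2 z) (fun z => S22 y1 y2 z)
      mu t); auto.
    + apply (filter_imp (inI a b)); [|apply locally_inI, Ht].
      intros z Hz; exact (Hunit _ _ _ HD Hz).
    + apply (filter_imp (inI a b)); [|apply locally_inI, Ht].
      intros z Hz; exact (Hquad _ _ _ HD Hz).
Qed.
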